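(* Let $\mathcal H_1,\dots,\mathcal H_9,\mathcal H_E$ be finite-dimensional complex Hilbert spaces and $|\psi\rangle\in\mathcal H_1\otimes\cdots\otimes\mathcal H_9\otimes\mathcal H_E$. For each $k\in[9]$ let $X_k,Z_k$ be Hermitian operators on $\mathcal H_k$ (extended by the identity to the whole space). Define $\tilde S_1=Z_1Z_2$, $\tilde S_2=Z_1Z_3$, $\tilde S_3=Z_4Z_5$, $\tilde S_4=Z_4Z_6$, $\tilde S_5=Z_7Z_8$, $\tilde S_6=Z_7Z_9$, $\tilde S_7=X_1X_2X_3X_4X_5X_6$, $\tilde S_8=X_1X_2X_3X_7X_8X_9$, $\tilde S_9=X_4X_5X_6X_7X_8X_9$. Assume (i) $X_kZ_k+Z_kX_k=0$ for $k\in\{1,4,7\}$; (ii) $\tilde S_k|\psi\rangle=|\psi\rangle$ for all $k\in[9]$; (iii) $X_k^2=Z_k^2=I$ for $k\in\{2,3,5,6,8,9\}$. Then for every $k\in[9]$: $X_k^2|\psi\rangle=Z_k^2|\psi\rangle=|\psi\rangle$ and $(X_kZ_k+Z_kX_k)|\psi\rangle=0$.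
   Context: Operators acting on different tensor factors commute. *)

From HB Require Import structures.
From mathcomp Require Import all_boot all_order all_algebra.
Set Implicit Arguments. Unset Strict Implicit. Unset Printing Implicit Defensive.
Import Order.TTheory GRing.Theory Num.Theory.
Local Open Scope ring_scope.

(* Factors 1..9 are indexed by k : 'I_9 (factor n is [fac n] = k with val k = n-1);
   factor k has dimension d k, the environment E has dimension dE.
   Each H_k is identified with C^(d k) via an orthonormal basis, so the
   computational basis of H_1 (x) ... (x) H_9 (x) H_E is indexed by Idx d dE. *)
Definition Idx (d : 'I_9 -> nat) (dE : nat) : Type :=
  ({dffun forall k : 'I_9, 'I_(d k)} * 'I_dE)%type.

Definition vec (C : nzRingType) (d : 'I_9 -> nat) (dE : nat) := {ffun Idx d dE -> C}.

Definition upd (d : 'I_9 -> nat) (dE : nat) (i : Idx d dE) (k : 'I_9) (j : 'I_(d k))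
  : Idx d dE := (finfun (dfwith i.1 j), i.2).

(* ext k M = M acting on factor k, tensored with the identity on all other factors *)
Definition ext (C : nzRingType) (d : 'I_9 -> nat) (dE : nat) (k : 'I_9)
  (M : 'M[C]_(d k)) (v : vec C d dE) : vec C d dE :=
  [ffun i : Idx d dE => \sum_(j < d k) M (i.1 k) j * v (@upd d dE i k j)].

Definition herm_mx (C : numClosedFieldType) (n : nat) (M : 'M[C]_n) : Prop :=
  forall i j, M j i = Num.conj (M i j).

Definition fac (n : nat) : 'I_9 := inord n.-1.

(* Operators acting on different tensor factors commute, so the stabilizer
   conditions can be rearranged freely.  Let b be one of 2, 3, 5, 6, 8, 9 and
   a in {1, 4, 7} the factor with Z_a Z_b a stabilizer: it gives Z_b psi = Z_a psi,
   and an X-stabilizer containing X_a X_b gives X_b psi = X_a W psi, W the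
   product of its remaining four factors; as Z_a anticommutes with X_a and
   commutes with everything else, X_b Z_b psi = - Z_b X_b psi.  For a itself,
   Z_a^2 psi = Z_a Z_b psi = psi, and squaring the X-stabilizers gives
   X_1^2 X_4^2 psi = X_1^2 X_7^2 psi = X_4^2 X_7^2 psi = psi, hence
   X_a^4 psi = psi; since X_a is Hermitian, this forces X_a^2 psi = psi. *)

From HB Require Import structures.
From mathcomp Require Import all_boot all_order all_algebra zify.
Import GRing.Theory Num.Theory.
Set Implicit Arguments. Unset Strict Implicit. Unset Printing Implicit Defensive.
Local Open Scope ring_scope.

Section BasisIndices.
Variables (d : 'I_9 -> nat) (dE : nat).
Implicit Types (i : Idx d dE) (k l : 'I_9).
Local Notation upd_at i k j := (@upd d dE i k j).

Lemma upd1 i k j : (upd_at i k j).1 k = j.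
Proof. by rewrite ffunE dfwith_in. Qed.

Lemma updN i k l j : k != l -> (upd_at i k j).1 l = i.1 l.
Proof. by move=> kl; rewrite ffunE dfwith_out. Qed.

Lemma idxP i i' : (forall l, i.1 l = i'.1 l) -> i.2 = i'.2 -> i = i'.
Proof. by case: i i' => [f e] [f' e'] /= eq_f ->; congr pair; apply/ffunP. Qed.

Lemma upd_id i k : upd_at i k (i.1 k) = i.
Proof.
apply: idxP => // l; have [<-|kl] := eqVneq k l; first by rewrite upd1.
by rewrite updN.
Qed.

Lemma upd_upd i k j j' : upd_at (upd_at i k j) k j' = upd_at i k j'.
Proof.
apply: idxP => // l; have [<-|kl] := eqVneq k l; first by rewrite !upd1.
by rewrite !updN.
Qed.

Lemma upd_comm i k l j j' : k != l -> upd_at (upd_at i k j) l j' = upd_at (upd_at i l j') k j.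
Proof.
move=> kl; apply: idxP => // m; have [<-|km] := eqVneq k m.
  by rewrite updN 1?eq_sym // !upd1.
have [<-|lm] := eqVneq l m; first by rewrite upd1 updN // upd1.
by rewrite !updN.
Qed.

(* [(i, j) |-> (upd_at i k j, i.1 k)] is an involution of the index pairs. *)
Lemma sum_upd_swap (R : nmodType) k (F : Idx d dE -> Idx d dE -> R) :
  \sum_i \sum_(j < d k) F i (upd_at i k j) = \sum_i \sum_(j < d k) F (upd_at i k j) i.
Proof.
pose flip (p : Idx d dE * 'I_(d k)) := (upd_at p.1 k p.2, p.1.1 k).
have flipK : involutive flip by case=> i j; rewrite /flip /= upd1 upd_upd upd_id.
rewrite !pair_bigA (reindex_inj (inv_inj flipK)) /=.
by apply: eq_bigr => -[i j] _ /=; rewrite upd_upd upd_id.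
Qed.

End BasisIndices.

Section FactorOperators.
Variables (C : numClosedFieldType) (d : 'I_9 -> nat) (dE : nat).
Implicit Types (k l : 'I_9) (u v psi : vec C d dE).
Local Notation upd_at i k j := (@upd d dE i k j).

Lemma ext_mul k (M N : 'M[C]_(d k)) v : ext M (ext N v) = ext (M *m N) v.
Proof.
apply/ffunP => i; rewrite !ffunE.
under eq_bigr => j _ do rewrite ffunE upd1 big_distrr /=.
rewrite exchange_big /=; apply: eq_bigr => j' _.
rewrite mxE big_distrl /=; apply: eq_bigr => j _.
by rewrite upd_upd mulrA.
Qed.

Lemma ext1 k v : ext (1%:M : 'M[C]_(d k)) v = v.
Proof.
apply/ffunP => i; rewrite ffunE (bigD1 (i.1 k)) //= big1 ?addr0.
  by rewrite mxE eqxx mul1r upd_id.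
by move=> j ne; rewrite mxE eq_sym (negbTE ne) mul0r.
Qed.

Lemma ext_sq1 k (M : 'M[C]_(d k)) v : M *m M = 1%:M -> ext M (ext M v) = v.
Proof. by move=> MM1; rewrite ext_mul MM1 ext1. Qed.

Lemma ext_anticomm k (M N : 'M[C]_(d k)) v :
  M *m N + N *m M = 0 -> ext M (ext N v) + ext N (ext M v) = 0.
Proof.
move=> anti; apply/ffunP => i; rewrite !ext_mul !ffunE -big_split big1 // => j _ /=.
move/matrixP/(_ (i.1 k) j): anti; rewrite [LHS]mxE [RHS]mxE => anti.
by rewrite -mulrDl anti mul0r.
Qed.

Lemma extB k (M : 'M[C]_(d k)) u v : ext M (u - v) = ext M u - ext M v.
Proof.
apply/ffunP => i; rewrite !ffunE -sumrB; apply: eq_bigr => j _.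
by rewrite !ffunE mulrBr.
Qed.

Lemma ext_comm k l (M : 'M[C]_(d k)) (N : 'M[C]_(d l)) v :
  k != l -> ext M (ext N v) = ext N (ext M v).
Proof.
move=> kl; apply/ffunP => i; rewrite !ffunE.
under eq_bigr => j _ do rewrite ffunE updN // big_distrr /=.
under [RHS]eq_bigr => j _ do rewrite ffunE updN 1?eq_sym // big_distrr /=.
rewrite exchange_big /=; apply: eq_bigr => j' _; apply: eq_bigr => j _.
by rewrite upd_comm // mulrCA.
Qed.

Definition dot u v : C := \sum_i (u i)^* * v i.

Lemma dotN u v : dot u (- v) = - dot u v.
Proof. by rewrite /dot -sumrN; apply: eq_bigr => i _; rewrite ffunE mulrN. Qed.

Lemma dot_ge0 v : 0 <= dot v v.
Proof. by apply: sumr_ge0 => i _; rewrite -normCKC exprn_ge0. Qed.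

Lemma dot_eq0 v : dot v v = 0 -> v = 0.
Proof.
have sq_ge0 i : 0 <= (v i)^* * v i by rewrite -normCKC exprn_ge0.
move=> vv0; apply/ffunP => i; rewrite ffunE.
have /eqP := psumr_eq0P (fun i _ => sq_ge0 i) vv0 (i := i) isT.
by rewrite -normCKC sqrf_eq0 normr_eq0 => /eqP.
Qed.

Lemma dot_ext k (M : 'M[C]_(d k)) u v : herm_mx M -> dot u (ext M v) = dot (ext M u) v.
Proof.
move=> hM; rewrite /dot.
under eq_bigr => i _ do rewrite ffunE big_distrr /=.
under [RHS]eq_bigr => i _ do rewrite ffunE rmorph_sum big_distrl /=.
pose F (a b : Idx d dE) := (u a)^* * M (a.1 k) (b.1 k) * v b.
transitivity (\sum_i \sum_(j < d k) F i (upd_at i k j)).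
  by apply: eq_bigr => i _; apply: eq_bigr => j _; rewrite /F upd1 mulrA.
rewrite sum_upd_swap; apply: eq_bigr => i _; apply: eq_bigr => j _.
by rewrite /F upd1 rmorphM /= (hM (i.1 k) j) [_ * (u _)^*]mulrC.
Qed.

(* [w := M^2 v - v] satisfies [M^2 w = - w], so [dot (M w) (M w) + dot w w = 0]. *)
Lemma ext_sq_fixed k (M : 'M[C]_(d k)) v :
  herm_mx M -> ext M (ext M (ext M (ext M v))) = v -> ext M (ext M v) = v.
Proof.
move=> hM M4v; set w := ext M (ext M v) - v.
have M2w : ext M (ext M w) = - w by rewrite /w !extB M4v opprB.
have : dot (ext M w) (ext M w) + dot w w = 0.
  by rewrite -dot_ext // M2w dotN addNr.
move/eqP; rewrite paddr_eq0 ?dot_ge0 // => /andP[_ /eqP /dot_eq0 /eqP].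
by rewrite subr_eq0 => /eqP.
Qed.

Definition ext_seq (s : seq 'I_9) (M : forall k, 'M[C]_(d k)) v : vec C d dE :=
  foldr (fun k w => ext (M k) w) v s.

Section ProductsOfFactorOperators.
Variable M : forall k, 'M[C]_(d k).
Implicit Types s t : seq 'I_9.

Lemma ext_seq_cat s t v : ext_seq (s ++ t) M v = ext_seq s M (ext_seq t M v).
Proof. exact: foldr_cat. Qed.

Lemma ext_comm_seq k (N : 'M[C]_(d k)) s v :
  k \notin s -> ext N (ext_seq s M v) = ext_seq s M (ext N v).
Proof.
elim: s => [|l s IHs] //=; rewrite inE negb_or => /andP[kl ks].
by rewrite ext_comm // IHs.
Qed.

Lemma ext_comm_seq_same k s v : ext (M k) (ext_seq s M v) = ext_seq s M (ext (M k) v).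
Proof.
elim: s => [|l s IHs] //=; rewrite -IHs.
by have [->|kl] := eqVneq k l; last exact: ext_comm.
Qed.

Lemma ext_seq_comm s t v : ext_seq s M (ext_seq t M v) = ext_seq t M (ext_seq s M v).
Proof. by elim: s v => [|k s IHs] v //=; rewrite IHs ext_comm_seq_same. Qed.

Lemma ext_seq_perm s t v : perm_eq s t -> ext_seq s M v = ext_seq t M v.
Proof.
elim: s t => [|k s IHs] t; first by rewrite perm_sym => /perm_nilP->.
move=> st; have kt : k \in t by rewrite -(perm_mem st) mem_head.
move: st; case/splitPr: kt => t1 t2 st.
have {}st : perm_eq s (t1 ++ t2).
  rewrite -(perm_cons k); apply: perm_trans st _.
  by apply/permPl; exact: (perm_catCA t1 [:: k] t2).
by rewrite /= (IHs _ st) !ext_seq_cat /= ext_comm_seq_same.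
Qed.

Lemma ext_seq_involutive s v :
  {in s, forall k, M k *m M k = 1%:M} -> ext_seq s M (ext_seq s M v) = v.
Proof.
elim: s v => [|k s IHs] v //= sq1.
rewrite ext_comm_seq_same ext_sq1 ?IHs ?sq1 ?mem_head //.
by move=> l ls; apply: sq1; rewrite inE ls orbT.
Qed.

Lemma ext_seq_sq_fixed r s t psi :
  perm_eq r (s ++ t) -> {in t, forall k, M k *m M k = 1%:M} ->
  ext_seq r M psi = psi -> ext_seq (s ++ s) M psi = psi.
Proof.
move=> rst t_sq1 fix_r.
have : ext_seq r M (ext_seq r M psi) = psi by rewrite !fix_r.
rewrite !(ext_seq_perm _ rst) !ext_seq_cat (ext_seq_comm t s).
by rewrite (ext_seq_involutive _ t_sq1).
Qed.

(* With [P], [Q], [R] the commuting squares of the factors [a], [b], [c]: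
   [P^2 psi = P^2 (Q R psi) = P Q (P R psi) = psi]. *)
Lemma fourth_powers_fixed a b c psi :
  ext_seq [:: a; b; a; b] M psi = psi -> ext_seq [:: a; c; a; c] M psi = psi ->
  ext_seq [:: b; c; b; c] M psi = psi ->
  [/\ ext_seq [:: a; a; a; a] M psi = psi, ext_seq [:: b; b; b; b] M psi = psi
    & ext_seq [:: c; c; c; c] M psi = psi].
Proof.
have fourth x y z : ext_seq [:: x; y; x; y] M psi = psi ->
    ext_seq [:: x; z; x; z] M psi = psi -> ext_seq [:: y; z; y; z] M psi = psi ->
    ext_seq [:: x; x; x; x] M psi = psi.
  move=> hxy hxz hyz; rewrite -[in LHS]hyz -ext_seq_cat.
  rewrite (ext_seq_perm _ (t := [:: x; y; x; y] ++ [:: x; z; x; z])).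
    by rewrite ext_seq_cat hxz hxy.
  by apply/permP => p /=; lia.
have swap x y : ext_seq [:: x; y; x; y] M psi = ext_seq [:: y; x; y; x] M psi.
  by apply: ext_seq_perm; apply/permP => p /=; lia.
move=> hab hac hbc; split; first exact: (fourth a b c).
  by apply: (fourth b a c); rewrite // -swap.
by apply: (fourth c a b); rewrite // -swap.
Qed.

End ProductsOfFactorOperators.

Lemma stab_pair_square a b (A : 'M[C]_(d a)) (B : 'M[C]_(d b)) psi :
  a != b -> B *m B = 1%:M -> ext A (ext B psi) = psi ->
  ext B psi = ext A psi /\ ext A (ext A psi) = psi.
Proof.
move=> ab BB1 ABpsi.
have BA : ext B psi = ext A psi by rewrite -{1}ABpsi ext_comm 1?eq_sym // ext_sq1.
by split; rewrite // -BA.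
Qed.

Section StabilizerConditions.
Variables (X Z : forall k, 'M[C]_(d k)) (psi : vec C d dE).

Lemma head_conditions a b :
  herm_mx (X a) -> a != b -> X a *m Z a + Z a *m X a = 0 -> Z b *m Z b = 1%:M ->
  ext (Z a) (ext (Z b) psi) = psi -> ext_seq [:: a; a; a; a] X psi = psi ->
  ext (X a) (ext (X a) psi) = psi /\ ext (Z a) (ext (Z a) psi) = psi /\
  ext (X a) (ext (Z a) psi) + ext (Z a) (ext (X a) psi) = 0.
Proof.
move=> hXa ab anti ZZ1 ZaZb X4; have [_ Za2] := stab_pair_square ab ZZ1 ZaZb.
by split; [exact: ext_sq_fixed | split; last exact: ext_anticomm].
Qed.

Lemma leg_conditions a b s r :
  uniq (a :: b :: s) -> perm_eq r (a :: b :: s) ->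
  X a *m Z a + Z a *m X a = 0 -> X b *m X b = 1%:M /\ Z b *m Z b = 1%:M ->
  ext (Z a) (ext (Z b) psi) = psi -> ext_seq r X psi = psi ->
  ext (X b) (ext (X b) psi) = psi /\ ext (Z b) (ext (Z b) psi) = psi /\
  ext (X b) (ext (Z b) psi) + ext (Z b) (ext (X b) psi) = 0.
Proof.
rewrite /= !inE negb_or -andbA => /and4P[ab a_s b_s _] rs anti [XX1 ZZ1] ZaZb Sr.
have ba : b != a by rewrite eq_sym.
have [Zb_Za _] := stab_pair_square ab ZZ1 ZaZb.
have Xb_W : ext (X b) psi = ext (X a) (ext_seq s X psi).
  by rewrite -{1}Sr (ext_seq_perm _ _ rs) /= (ext_comm (X b) (X a)) // ext_sq1.
split; [exact: ext_sq1 | split; first exact: ext_sq1].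
rewrite Zb_Za (ext_comm (X b) (Z a)) // Xb_W (ext_comm (Z b) (X a)) //.
rewrite [ext (Z b) _]ext_comm_seq // Zb_Za -[ext_seq s X (ext _ _)]ext_comm_seq //.
by rewrite addrC ext_anticomm.
Qed.

End StabilizerConditions.

End FactorOperators.

Lemma facE n (lt_n9 : (n.-1 < 9)%N) : fac n = Ordinal lt_n9.
Proof. by apply: val_inj; rewrite /fac /= inordK. Qed.

Theorem mainTheorem4 (C : numClosedFieldType) (d : 'I_9 -> nat) (dE : nat)
  (X Z : forall k : 'I_9, 'M[C]_(d k)) (psi : vec C d dE) :
  (forall k : 'I_9, herm_mx (X k) /\ herm_mx (Z k)) ->
  let XX := fun k : 'I_9 => @ext C d dE k (X k) in
  let ZZ := fun k : 'I_9 => @ext C d dE k (Z k) in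
  (* (i) *)
  (forall k : 'I_9, k \in [:: fac 1; fac 4; fac 7] ->
     X k *m Z k + Z k *m X k = 0) ->
  (* (ii) stabilizer conditions *)
  ZZ (fac 1) (ZZ (fac 2) psi) = psi ->
  ZZ (fac 1) (ZZ (fac 3) psi) = psi ->
  ZZ (fac 4) (ZZ (fac 5) psi) = psi ->
  ZZ (fac 4) (ZZ (fac 6) psi) = psi ->
  ZZ (fac 7) (ZZ (fac 8) psi) = psi ->
  ZZ (fac 7) (ZZ (fac 9) psi) = psi ->
  XX (fac 1) (XX (fac 2) (XX (fac 3) (XX (fac 4) (XX (fac 5) (XX (fac 6) psi))))) = psi ->
  XX (fac 1) (XX (fac 2) (XX (fac 3) (XX (fac 7) (XX (fac 8) (XX (fac 9) psi))))) = psi ->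
  XX (fac 4) (XX (fac 5) (XX (fac 6) (XX (fac 7) (XX (fac 8) (XX (fac 9) psi))))) = psi ->
  (* (iii) *)
  (forall k : 'I_9, k \in [:: fac 2; fac 3; fac 5; fac 6; fac 8; fac 9] ->
     X k *m X k = 1%:M /\ Z k *m Z k = 1%:M) ->
  forall k : 'I_9,
    XX k (XX k psi) = psi /\ ZZ k (ZZ k psi) = psi /\
    XX k (ZZ k psi) + ZZ k (XX k psi) = 0.
Proof.
move=> herm XX ZZ anti S1 S2 S3 S4 S5 S6 S7 S8 S9 invol.
have {}S7 : ext_seq [:: fac 1; fac 2; fac 3; fac 4; fac 5; fac 6] X psi = psi := S7.
have {}S8 : ext_seq [:: fac 1; fac 2; fac 3; fac 7; fac 8; fac 9] X psi = psi := S8.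
have {}S9 : ext_seq [:: fac 4; fac 5; fac 6; fac 7; fac 8; fac 9] X psi = psi := S9.
have sq_stab a b t r : perm_eq r ([:: a; b] ++ t) ->
    all (mem [:: fac 2; fac 3; fac 5; fac 6; fac 8; fac 9]) t ->
    ext_seq r X psi = psi -> ext_seq [:: a; b; a; b] X psi = psi.
  by move=> rt /allP t_legs; apply: ext_seq_sq_fixed rt _ => k /t_legs /invol[].
have X14 : ext_seq [:: fac 1; fac 4; fac 1; fac 4] X psi = psi.
  by apply: (sq_stab _ _ [:: fac 2; fac 3; fac 5; fac 6] _ _ _ S7); rewrite !facE.
have X17 : ext_seq [:: fac 1; fac 7; fac 1; fac 7] X psi = psi.
  by apply: (sq_stab _ _ [:: fac 2; fac 3; fac 8; fac 9] _ _ _ S8); rewrite !facE.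
have X47 : ext_seq [:: fac 4; fac 7; fac 4; fac 7] X psi = psi.
  by apply: (sq_stab _ _ [:: fac 5; fac 6; fac 8; fac 9] _ _ _ S9); rewrite !facE.
have [X1 X4 X7] := fourth_powers_fixed X14 X17 X47.
move=> k; have -> : k = fac k.+1 by rewrite /fac inord_val.
case: k => -[|[|[|[|[|[|[|[|[|//]]]]]]]]] _ /=.
- by apply: (head_conditions (herm _).1 _ (anti _ _) (invol _ _).2 S1 X1); rewrite !facE.
- apply: (leg_conditions (s := [:: fac 3; fac 4; fac 5; fac 6]) _ _ (anti _ _) (invol _ _) S1 S7);
    by rewrite !facE.
- apply: (leg_conditions (s := [:: fac 2; fac 4; fac 5; fac 6]) _ _ (anti _ _) (invol _ _) S2 S7);
    by rewrite !facE.
- by apply: (head_conditions (herm _).1 _ (anti _ _) (invol _ _).2 S3 X4); rewrite !facE.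
- apply: (leg_conditions (s := [:: fac 1; fac 2; fac 3; fac 6]) _ _ (anti _ _) (invol _ _) S3 S7);
    by rewrite !facE.
- apply: (leg_conditions (s := [:: fac 1; fac 2; fac 3; fac 5]) _ _ (anti _ _) (invol _ _) S4 S7);
    by rewrite !facE.
- by apply: (head_conditions (herm _).1 _ (anti _ _) (invol _ _).2 S5 X7); rewrite !facE.
- apply: (leg_conditions (s := [:: fac 1; fac 2; fac 3; fac 9]) _ _ (anti _ _) (invol _ _) S5 S8);
    by rewrite !facE.
- apply: (leg_conditions (s := [:: fac 1; fac 2; fac 3; fac 8]) _ _ (anti _ _) (invol _ _) S6 S8);
    by rewrite !facE.
Qed.
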